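(* Let $\Pi_1=(\mathcal{A},\mathcal{E},\mathcal{R}_1)$ and $\Pi_2=(\mathcal{A},\mathcal{E},\mathcal{R}_2)$ be epistemic logic programs with the same SE-function, i.e. $\mathcal{SE}_{\Pi_1}(\Phi)=\mathcal{SE}_{\Pi_2}(\Phi)$ for every guess $\Phi\subseteq\mathcal{E}$. Then $\Pi_1$ and $\Pi_2$ are CWV-equivalent (and hence WV-equivalent).
   Context: A literal over a set of atoms $\mathcal{A}$ is an atom $a$ or $\neg a$. An interpretation is $I\subseteq\mathcal{A}$; $I\models a$ iff $a\in I$, $I\models\neg\ell$ iff $I\not\models\ell$. A (plain) logic program $(\mathcal{A},\mathcal{R})$ has rules $a_1\vee\cdots\vee a_l \leftarrow a_{l+1},\ldots,a_m,\neg\ell_1,\ldots,\neg\ell_n$ ($\ell_i$ literals); $H(r)$ head, $B(r)$ body, $B^+(r)=\{a_{l+1},\ldots,a_m\}$; $M\models r$ iff $M\models B(r)$ implies $M\cap H(r)\neq\emptyset$; $\mathrm{Mods}(\Pi)$ is the set of models. GL-reduct: $\Pi^I=(\mathcal{A},\{H(r)\leftarrow B^+(r)\mid r\in\mathcal{R},\ I\models\neg\ell\ \forall\neg\ell\in B(r)\})$. Answer set: model $M$ of $\Pi$ such that no $M'\subset M$ is a model of $\Pi^M$; $AS(\Pi)$ the set of answer sets ($\neg\neg\neg a$ treated as $\neg a$). An SE-model of $\Pi$ is $(X,Y)$ with $X\subseteq Y\subseteq\mathcal{A}$, $Y\models\Pi$, $X\models\Pi^Y$; $\mathrm{SE}(\Pi)$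 the set of SE-models. An ELP is $(\mathcal{A},\mathcal{E},\mathcal{R})$ with $\mathcal{E}$ a set of epistemic literals $\mathbf{not}\,\ell$ and rules $a_1\vee\cdots\vee a_k\leftarrow \ell_1,\ldots,\ell_m,\xi_1,\ldots,\xi_j,\neg\xi_{j+1},\ldots,\neg\xi_n$, $\xi_i\in\mathcal{E}$. A guess is $\Phi\subseteq\mathcal{E}$; $\mathcal{I}$ is $\Phi$-compatible w.r.t. $\mathcal{E}$ iff $\mathcal{I}\neq\emptyset$, every $\mathbf{not}\,\ell\in\Phi$ has some $I\in\mathcal{I}$ with $I\not\models\ell$, and every $\mathbf{not}\,\ell\in\mathcal{E}\setminus\Phi$ has $I\models\ell$ for all $I\in\mathcal{I}$. The epistemic reduct $\Pi^\Phi=(\mathcal{A},\mathcal{R}^\Phi)$ replaces each $\mathbf{not}\,\ell\in\Phi$ by $\top$ and every other $\mathbf{not}$ by $\neg$. A candidate world view (CWV) of $\Pi$ is a set $\mathcal{M}=AS(\Pi^\Phi)$ that is $\Phi$-compatible w.r.t. $\mathcal{E}$, for some guess $\Phi$ (its associated guess). A world view (WV) is a CWV whose associated guess $\Phi$ is subset-maximal: no CWV has an associated guess $\Phi'\supset\Phi$. Two ELPs are CWV-equivalent (WV-equivalent) iff their sets of CWVs (WVs) coincide. $\Phi$ is realizable in $\Pi$ iff some subset of $\mathrm{Mods}(\Pi^\Phi)$ is $\Phi$-compatible w.r.t. $\mathcal{E}$. The SE-function: $\mathcal{SE}_\Pi(\Phi)=\mathrm{SE}(\Pi^\Phi)$ if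 $\Phi$ is realizable in $\Pi$, and $\emptyset$ otherwise. *)

From mathcomp Require Import all_boot.
Set Implicit Arguments. Unset Strict Implicit. Unset Printing Implicit Defensive.

Section ELP.
Variable A : finType.

(* A literal: (true, a) is the atom a, (false, a) is the literal ~a. *)
Definition lit := (bool * A)%type.
Definition interp := {set A}.

Definition sat_lit (I : interp) (l : lit) : bool :=
  if l.1 then l.2 \in I else l.2 \notin I.

(* Complementary literal: used to write ~~l as ~l' (with ~~~a read as ~a). *)
Definition compl_lit (l : lit) : lit := (~~ l.1, l.2).

(* Plain rule  a_1 v ... v a_l <- a_{l+1},...,a_m, ~l_1,...,~l_n
   pneg lists the literals l_i occurring as ~l_i. *)
Record prule := PRule { phead : seq A; ppos : seq A; pneg : seq lit }.
Definition program := seq prule.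

Definition neg_ok (I : interp) (r : prule) : bool :=
  all (fun l => ~~ sat_lit I l) (pneg r).
Definition sat_body (I : interp) (r : prule) : bool :=
  all (fun a => a \in I) (ppos r) && neg_ok I r.
Definition sat_rule (M : interp) (r : prule) : bool :=
  sat_body M r ==> has (fun a => a \in M) (phead r).
Definition is_model (M : interp) (P : program) : bool := all (sat_rule M) P.
Definition Mods (P : program) : {set interp} := [set M | is_model M P].

Definition gl_reduct (P : program) (I : interp) : program :=
  [seq PRule (phead r) (ppos r) [::] | r <- P & neg_ok I r].

Definition is_answer_set (P : program) (M : interp) : bool :=
  is_model M P &&
  [forall M' : {set A}, (M' \proper M) ==> ~~ is_model M' (gl_reduct P M)].
Definition AS (P : program) : {set interp} := [set M | is_answer_set P M].

Definition SE (P : program) : {set (interp * interp)} :=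
  [set XY : interp * interp | [&& XY.1 \subset XY.2, is_model XY.2 P & is_model XY.1 (gl_reduct P XY.2)]].

(* ELP rule  a_1 v...v a_k <- l_1..l_m, xi_1..xi_j, ~xi_{j+1}..~xi_n ;
   an epistemic literal  not l  is represented by the literal l. *)
Record erule := ERule { ehead : seq A; elits : seq lit; epos : seq lit; eneg : seq lit }.

Definition wf_elp (E : {set lit}) (R : seq erule) : Prop :=
  all (fun r => all (fun l => l \in E) (epos r ++ eneg r)) R.

(* Epistemic reduct of a rule: not l in Phi becomes T (dropped from the body);
   a ~T (= falsum) in the body makes the rule vacuous, so it is removed;
   other  not l  become ~l, and  ~ not l  becomes ~~l (written ~(compl l)). *)
Definition erule_reduct (Phi : {set lit}) (r : erule) : option prule :=
  if has (fun l => l \in Phi) (eneg r) then None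
  else Some (PRule (ehead r)
                   [seq l.2 | l <- elits r & l.1]
                   ([seq (true, l.2) | l <- elits r & ~~ l.1]
                    ++ [seq l <- epos r | l \notin Phi]
                    ++ [seq compl_lit l | l <- eneg r])).

Definition ereduct (R : seq erule) (Phi : {set lit}) : program :=
  pmap (erule_reduct Phi) R.

Definition compatible (E Phi : {set lit}) (II : {set interp}) : bool :=
  [&& II != set0,
      [forall l in Phi, [exists I in II, ~~ sat_lit I l]] &
      [forall l in E :\: Phi, [forall I in II, sat_lit I l]]].

Definition cwv_guess (E : {set lit}) (R : seq erule) (Phi : {set lit})
    (M : {set interp}) : Prop :=
  [/\ Phi \subset E, M = AS (ereduct R Phi) & compatible E Phi M].

Definition is_CWV E R (M : {set interp}) : Prop := exists Phi, cwv_guess E R Phi M.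

Definition is_WV E R (M : {set interp}) : Prop :=
  exists Phi, cwv_guess E R Phi M /\
    forall Phi' M', cwv_guess E R Phi' M' -> ~ (Phi \proper Phi').

Definition realizable (E : {set lit}) (R : seq erule) (Phi : {set lit}) : bool :=
  [exists II : {set interp}, (II \subset Mods (ereduct R Phi)) && compatible E Phi II].

Definition SEfun (E : {set lit}) (R : seq erule) (Phi : {set lit})
    : {set (interp * interp)} :=
  if realizable E R Phi then SE (ereduct R Phi) else set0.

End ELP.

From mathcomp Require Import all_boot.

Set Implicit Arguments.
Unset Strict Implicit.
Unset Printing Implicit Defensive.

(* Answer sets are determined by SE-models: M is an answer set of P iff (M, M)
   is an SE-model of P and no (M', M) with M' a proper subset of M is one.
   If M is a candidate world view with guess Phi, then M is a nonempty set of
   models of the reduct R1^Phi, so Phi is realizable in R1 and SE(R1^Phi)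
   contains (M0, M0) for any M0 in M.  Equality of the SE-functions at Phi thus
   forces Phi to be realizable in R2 as well, and SE(R2^Phi) = SE(R1^Phi), so
   both reducts have the same answer sets.  Hence the two programs have the
   same (candidate world view, associated guess) pairs, which determine both
   the candidate world views and the world views. *)

Section AnswerSets.
Variable A : finType.
Implicit Types (P : program A) (M : interp A).

Lemma is_model_gl_reduct P M : is_model M P -> is_model M (gl_reduct P M).
Proof.
rewrite /is_model /gl_reduct; elim: P => //= r P IH /andP[Mr MP].
case Er: (neg_ok M r); rewrite /= IH // andbT.
by move: Mr; rewrite /sat_rule /sat_body Er.
Qed.

Lemma is_answer_setE P M :
  is_answer_set P M =
  ((M, M) \in SE P) &&
  [forall M' : interp A, (M' \proper M) ==> ((M', M) \notin SE P)].
Proof.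
rewrite /is_answer_set inE /= subxx /=.
case MP: (is_model M P) => //=; rewrite is_model_gl_reduct //=.
apply: eq_forallb => M'; case: (boolP (M' \proper M)) => //= ltM'M.
by rewrite inE /= MP (proper_sub ltM'M).
Qed.

Lemma AS_SE P M : M \in AS P -> (M, M) \in SE P.
Proof. by rewrite inE is_answer_setE => /andP[]. Qed.

Lemma AS_sub_Mods P : AS P \subset Mods P.
Proof. by apply/subsetP => M; rewrite !inE => /andP[]. Qed.

Lemma SE_eq_AS P1 P2 : SE P1 = SE P2 -> AS P1 = AS P2.
Proof. by move=> eqSE; apply/setP => M; rewrite !inE !is_answer_setE eqSE. Qed.

End AnswerSets.

Section WorldViews.
Variables (A : finType) (E : {set lit A}).
Implicit Types (R : seq (erule A)) (Phi : {set lit A}) (M : {set interp A}).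

Lemma cwv_guess_realizable R Phi M : cwv_guess E R Phi M -> realizable E R Phi.
Proof.
case=> _ -> compatM; apply/existsP; exists (AS (ereduct R Phi)).
by rewrite compatM andbT AS_sub_Mods.
Qed.

Lemma cwv_guess_SEfun R1 R2 Phi M :
  SEfun E R1 Phi = SEfun E R2 Phi -> cwv_guess E R1 Phi M -> cwv_guess E R2 Phi M.
Proof.
move=> eqSEfun guess1; have realR1 := cwv_guess_realizable guess1.
case: guess1 => subPhiE defM compatM.
move: eqSEfun; rewrite /SEfun realR1; case: ifP => _ eqSE.
  by split; rewrite // defM (SE_eq_AS eqSE).
case/and3P: compatM => /set0Pn[M0]; rewrite defM => /AS_SE.
by rewrite eqSE inE.
Qed.

Lemma cwv_guess_eq_CWV_WV R1 R2 :
  (forall Phi M, cwv_guess E R1 Phi M <-> cwv_guess E R2 Phi M) ->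
  (forall M, is_CWV E R1 M <-> is_CWV E R2 M) /\
  (forall M, is_WV E R1 M <-> is_WV E R2 M).
Proof.
move=> eqguess; split=> M; split.
- by case=> Phi /eqguess; exists Phi.
- by case=> Phi /eqguess; exists Phi.
- case=> Phi [/eqguess guess2 maxPhi]; exists Phi; split=> // Phi' M' /eqguess.
  exact: maxPhi.
- case=> Phi [/eqguess guess1 maxPhi]; exists Phi; split=> // Phi' M' /eqguess.
  exact: maxPhi.
Qed.

End WorldViews.

Theorem lemma2 (A : finType) (E : {set lit A}) (R1 R2 : seq (erule A)) :
  wf_elp E R1 -> wf_elp E R2 ->
  (forall Phi : {set lit A}, Phi \subset E -> SEfun E R1 Phi = SEfun E R2 Phi) ->
  (forall M : {set {set A}}, is_CWV E R1 M <-> is_CWV E R2 M) /\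
  (forall M : {set {set A}}, is_WV E R1 M <-> is_WV E R2 M).
Proof.
move=> _ _ eqSEfun; apply: cwv_guess_eq_CWV_WV => Phi M.
by split=> guess; have [subPhiE _ _] := guess;
  apply: cwv_guess_SEfun guess; rewrite eqSEfun.
Qed.
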